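(* Let $\{g_1,\dots,g_p\}\subset\mathbb{N}^2$ be the minimal system of generators of a semigroup $\mathcal{F}$, and let $\tau=\{tg_1\mid t\in\mathbb{Q}\}$ be an extremal ray of $\mathcal{F}$. Assume that $g_1$ generates $\mathbb{N}^2\cap\tau$. Let $\{s_1,\dots,s_t\}$ be the minimal system of generators of a subsemigroup of $\mathbb{N}^2\cap\tau$, and let $0<\lambda_1<\cdots<\lambda_t$ be the integers with $s_i=\lambda_ig_1$. Let $\mathcal{F}'$ be the semigroup generated by $B=B_1\cup B_2$, where $$B_1=\{s_1,\dots,s_t,g_2,\dots,g_p\},\qquad B_2=\bigcup_{i=2}^p\{g_i+g_1,\dots,g_i+(\lambda_t-1)g_1\}.$$ Then $\mathcal{F}'\cap\tau=\langle s_1,\dots,s_t\rangle$ and $\mathcal{F}'\setminus\tau=\mathcal{F}\setminus\tau$.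
   Context: $\mathbb{N}=\{0,1,2,\dots\}$. For $\{a_1,\dots,a_r\}\subseteq\mathbb{N}^2$, $\langle a_1,\dots,a_r\rangle=\{\sum\lambda_ja_j\mid\lambda_j\in\mathbb{N}\}$ is the semigroup generated by them; a minimal system of generators is a generating set no proper subset of which generates. An extremal ray of $\mathcal{F}$ is a boundary ray of the cone of non-negative rational combinations of elements of $\mathcal{F}$. *)

From mathcomp Require Import all_boot all_order all_algebra.
Set Implicit Arguments. Unset Strict Implicit. Unset Printing Implicit Defensive.
Import Order.TTheory GRing.Theory Num.Theory.
Local Open Scope ring_scope.

Definition pt := (nat * nat)%type.
Definition ptadd (a b : pt) : pt := (a.1 + b.1, a.2 + b.2)%N.
Definition ptscale (k : nat) (a : pt) : pt := (k * a.1, k * a.2)%N.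

Definition gen (A : seq pt) (x : pt) : Prop :=
  exists lam : nat -> nat,
    x = (\sum_(i < size A) lam i * (nth (0,0)%N A i).1,
         \sum_(i < size A) lam i * (nth (0,0)%N A i).2)%N.

Definition is_min_gens (A : seq pt) (F : pt -> Prop) : Prop :=
  uniq A /\ (forall x, F x <-> gen A x) /\
  (forall B : seq pt, {subset B <= A} -> (forall x, F x <-> gen B x) ->
     {subset A <= B}).

Definition cone (A : seq pt) (v : rat * rat) : Prop :=
  exists q : nat -> rat, (forall i, 0 <= q i) /\
    v = (\sum_(i < size A) q i * ((nth (0,0)%N A i).1)%:R,
         \sum_(i < size A) q i * ((nth (0,0)%N A i).2)%:R).

Definition on_line (g : pt) (v : rat * rat) : Prop :=
  exists t : rat, v = (t * (g.1)%:R, t * (g.2)%:R).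

Definition embQ (x : pt) : rat * rat := ((x.1)%:R, (x.2)%:R).

Definition extremal_ray (A : seq pt) (g : pt) : Prop :=
  g != (0,0)%N /\ cone A (embQ g) /\
  forall x y : rat * rat, cone A x -> cone A y ->
    on_line g (x.1 + y.1, x.2 + y.2) -> on_line g x /\ on_line g y.

(* Both halves rest on the fact that tau is a face: if a sum of elements of F
   lies on tau, so does every summand.  Hence an element of F' on tau can only
   use the generators of B lying on tau, which are the s_i (the g_i, i > 1, and
   hence the g_i + k g_1, are off tau by minimality).  Conversely, an element
   z of F is either a multiple of g_1 or z + r g_1 lies in F' for every
   r < lambda_t: adding g_1 increases r, wrapping around through s_t, and a
   term g_i + n g_1 is handled by writing n = q lambda_t + m. *)

From mathcomp Require Import all_boot all_order all_algebra.
From mathcomp Require Import zify.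
Import Order.TTheory GRing.Theory Num.Theory.
Set Implicit Arguments. Unset Strict Implicit. Unset Printing Implicit Defensive.

Ltac pt_arith := rewrite /ptadd /ptscale /=; congr pair; nia.

Lemma addptC u v : ptadd u v = ptadd v u.
Proof. pt_arith. Qed.

Lemma addptA u v w : ptadd u (ptadd v w) = ptadd (ptadd u v) w.
Proof. pt_arith. Qed.

Lemma add0pt u : ptadd (0,0)%N u = u.
Proof. by case: u. Qed.

Lemma addpt0 u : ptadd u (0,0)%N = u.
Proof. by rewrite addptC add0pt. Qed.

Lemma scaleptS n a : ptscale n.+1 a = ptadd a (ptscale n a).
Proof. pt_arith. Qed.

Lemma scaleptD m n a : ptscale (m + n) a = ptadd (ptscale m a) (ptscale n a).
Proof. pt_arith. Qed.

Lemma scaleptM m n a : ptscale (m * n) a = ptscale m (ptscale n a).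
Proof. by rewrite /ptscale /= !mulnA. Qed.

Inductive sgen (A : seq pt) : pt -> Prop :=
| sgen0 : sgen A (0,0)%N
| sgenS a y : a \in A -> sgen A y -> sgen A (ptadd a y).
Arguments sgenS {A a y}.

Lemma sgen_add A x y : sgen A x -> sgen A y -> sgen A (ptadd x y).
Proof.
elim=> [|a z Ha _ IH] Hy; first by rewrite add0pt.
by rewrite -addptA; apply: sgenS Ha (IH Hy).
Qed.

Lemma sgen_mem A a : a \in A -> sgen A a.
Proof. by move=> Ha; rewrite -[a]addpt0; apply: sgenS Ha (sgen0 A). Qed.

Lemma sgen_scale A n a : a \in A -> sgen A (ptscale n a).
Proof.
move=> Ha; elim: n => [|n IH]; first exact: sgen0.
by rewrite scaleptS; apply: sgenS.
Qed.

Lemma sgen_trans A A' x : {in A, forall a, sgen A' a} -> sgen A x -> sgen A' x.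
Proof.
move=> HA; elim=> [|a y Ha _ IH]; first exact: sgen0.
exact: sgen_add (HA a Ha) IH.
Qed.

Lemma sgen_sub A A' x : {subset A <= A'} -> sgen A x -> sgen A' x.
Proof. by move=> sAA'; apply: sgen_trans => a /sAA' /sgen_mem. Qed.

Lemma gen0 A : gen A (0,0)%N.
Proof. by exists (fun _ => 0%N); congr pair; rewrite big1. Qed.

Lemma gen_add A x y : gen A x -> gen A y -> gen A (ptadd x y).
Proof.
move=> [lx ->] [ly ->]; exists (fun i => lx i + ly i)%N.
by rewrite /ptadd /=; congr pair; rewrite -big_split; apply: eq_bigr => i _;
  rewrite mulnDl.
Qed.

Lemma gen_nil x : gen [::] x -> x = (0,0)%N.
Proof. by move=> [lam ->]; rewrite !big_ord0. Qed.

Lemma gen_cons a A x :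
  gen (a :: A) x <-> exists n y, gen A y /\ x = ptadd (ptscale n a) y.
Proof.
split=> [[lam ->]|[n [y [[lam ->] ->]]]].
- exists (lam 0%N), (\sum_(i < size A) lam i.+1 * (nth (0,0)%N A i).1,
                     \sum_(i < size A) lam i.+1 * (nth (0,0)%N A i).2)%N.
  by split; [exists (fun i => lam i.+1) | rewrite /= !big_ord_recl].
- exists (fun i => if i is j.+1 then lam j else n).
  by rewrite /= !big_ord_recl.
Qed.

Lemma gen_mem A a : a \in A -> gen A a.
Proof.
elim: A => [|b A IH] //; rewrite in_cons => /orP[/eqP->|Ha]; apply/gen_cons.
- exists 1%N, (0,0)%N; split; first exact: gen0.
  by case: b => ? ?; rewrite /ptadd /ptscale /= !mul1n !addn0.
- by exists 0%N, a; split; [exact: IH | rewrite add0pt].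
Qed.

Lemma genP A x : gen A x <-> sgen A x.
Proof.
split; last by elim=> [|a y Ha _ IH]; [exact: gen0 | exact: gen_add (gen_mem Ha) IH].
elim: A x => [|b A IH] x; first by move/gen_nil ->; exact: sgen0.
move/gen_cons=> [n [y [/IH Hy ->]]].
apply: sgen_add; first exact/sgen_scale/mem_head.
by apply: sgen_sub Hy => z Hz; rewrite in_cons Hz orbT.
Qed.

Definition pt_on_line (g x : pt) := on_line g (embQ x).

Section Line.
Local Open Scope ring_scope.

Lemma pt_on_line_scale g k : pt_on_line g (ptscale k g).
Proof. by exists k%:R; rewrite /embQ /ptscale /= !natrM. Qed.

Lemma pt_on_line_add g u v :
  pt_on_line g u -> pt_on_line g v -> pt_on_line g (ptadd u v).
Proof.
move=> [t [H1 H2]] [t' [H1' H2']]; exists (t + t').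
by rewrite /embQ /ptadd /= !natrD !mulrDl H1 H2 H1' H2'.
Qed.

Lemma cone_gen A u : gen A u -> cone A (embQ u).
Proof.
move=> [lam ->]; exists (fun i => (lam i)%:R); split=> [i|]; first exact: ler0n.
by rewrite /embQ /= !natr_sum; congr pair; apply: eq_bigr => i _; rewrite natrM.
Qed.

Lemma extremal_ray_split A g u v : extremal_ray A g ->
  gen A u -> gen A v -> pt_on_line g (ptadd u v) ->
  pt_on_line g u /\ pt_on_line g v.
Proof.
move=> [_ [_ face]] Hu Hv Huv; apply: face; [exact: cone_gen | exact: cone_gen |].
by move: Huv; rewrite /pt_on_line /embQ /ptadd /= !natrD.
Qed.

Lemma extremal_ray_add_off_line A g u v : extremal_ray A g ->
  gen A u -> gen A v -> ~ pt_on_line g u -> ~ pt_on_line g (ptadd u v).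
Proof. by move=> ext Hu Hv Ou /(extremal_ray_split ext Hu Hv)[]. Qed.

Lemma sgen_multiples_on_line g (lam : seq nat) x :
  sgen [seq ptscale l g | l <- lam] x -> pt_on_line g x.
Proof.
elim=> [|b y /mapP[l _ ->] _ IH]; first exact: (pt_on_line_scale g 0).
exact: pt_on_line_add (pt_on_line_scale _ _) IH.
Qed.

End Line.

Lemma sgen_on_extremal_ray A B S g x : extremal_ray A g ->
  {in B, forall b, sgen A b} ->
  {in B, forall b, pt_on_line g b -> b \in S} ->
  sgen B x -> pt_on_line g x -> sgen S x.
Proof.
move=> ext BA BS; elim=> [|b y Hb Hy IH] Hby; first exact: sgen0.
have [Ob Oy] := extremal_ray_split ext
  ((genP _ _).2 (BA b Hb)) ((genP _ _).2 (sgen_trans BA Hy)) Hby.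
exact: sgenS (BS b Hb Ob) (IH Oy).
Qed.

(* If g_i were on tau it would be a multiple of g_1, and dropping it from the
   generators would contradict minimality. *)
Lemma min_gens_off_line g1 gs gi :
  is_min_gens (g1 :: gs) (gen (g1 :: gs)) ->
  (forall x, pt_on_line g1 x -> gen [:: g1] x) ->
  gi \in gs -> ~ pt_on_line g1 gi.
Proof.
move=> [uA [_ minA]] line1 Hgi /line1/gen_cons[n [y [/gen_nil Ey Egi]]].
rewrite Ey addpt0 in Egi.
have g1gi : g1 != gi by apply: contraTneq uA => ->; rewrite /= Hgi.
pose B := [seq z <- g1 :: gs | z != gi].
have sBA : {subset B <= g1 :: gs} by move=> z; rewrite mem_filter => /andP[].
suff /(minA B sBA)/(_ gi) : forall x, gen (g1 :: gs) x <-> gen B x.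
  by rewrite mem_filter eqxx mem_behead //= => /(_ isT).
move=> x; rewrite !genP; split; last exact: sgen_sub.
apply: sgen_trans => a Ha; case: (eqVneq a gi) => [->|ne].
  by rewrite Egi; apply: sgen_scale; rewrite mem_filter g1gi mem_head.
by apply: sgen_mem; rewrite mem_filter ne Ha.
Qed.

Section Shift.
Variables (g1 : pt) (gs B : seq pt) (L : nat).
Hypothesis L_gt0 : (0 < L)%N.
Hypothesis scaleL_in : ptscale L g1 \in B.
Hypothesis gs_in : {subset gs <= B}.
Hypothesis shift_in :
  forall gi m, gi \in gs -> (0 < m < L)%N -> ptadd gi (ptscale m g1) \in B.

Lemma sgen_gs_shift gi n : gi \in gs -> sgen B (ptadd (ptscale n g1) gi).
Proof.
move=> Hgi; rewrite (divn_eq n L) scaleptD scaleptM -addptA.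
apply: sgen_add; first exact: sgen_scale.
have [->|m_gt0] := posnP (n %% L); first by rewrite add0pt; exact/sgen_mem/gs_in.
by rewrite addptC; apply/sgen_mem/shift_in; rewrite ?m_gt0 ?ltn_pmod.
Qed.

Lemma sgen_shift z : sgen (g1 :: gs) z ->
  (exists n, z = ptscale n g1) \/
  forall r, (r < L)%N -> sgen B (ptadd z (ptscale r g1)).
Proof.
elim=> [|a y Ha _ [[n ->]|IH]]; first by left; exists 0%N.
- move: Ha; rewrite in_cons => /orP[/eqP->|Hgi].
    by left; exists n.+1; rewrite scaleptS.
  right=> r _; have -> : ptadd (ptadd a (ptscale n g1)) (ptscale r g1) =
                         ptadd (ptscale (n + r) g1) a by pt_arith.
  exact: sgen_gs_shift.
- right=> r Hr; move: Ha; rewrite in_cons => /orP[/eqP->|Hgi]; last first.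
    by rewrite -addptA; apply: sgen_add (sgen_mem (gs_in Hgi)) (IH r Hr).
  have -> : ptadd (ptadd g1 y) (ptscale r g1) = ptadd y (ptscale r.+1 g1).
    by pt_arith.
  have [/IH //|Lr] := ltnP r.+1 L.
  have -> : ptadd y (ptscale r.+1 g1) =
            ptadd (ptscale L g1) (ptadd y (ptscale 0 g1)) by pt_arith.
  exact: sgen_add (sgen_mem scaleL_in) (IH 0%N L_gt0).
Qed.

Lemma sgen_off_line z :
  sgen (g1 :: gs) z -> ~ pt_on_line g1 z -> sgen B z.
Proof.
move=> /sgen_shift[[n ->] /(_ (pt_on_line_scale g1 n)) //|/(_ 0%N L_gt0)].
by rewrite addpt0.
Qed.

End Shift.

Lemma last_sorted_gt0 (lam : seq nat) :
  lam != [::] -> (0 < head 0 lam)%N -> sorted ltn lam -> (0 < last 0 lam)%N.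
Proof.
case: lam => [|l t] //= _ l_gt0 /(order_path_min ltn_trans) /allP t_gt.
case: t t_gt => [|m t] //= t_gt; apply: leq_trans l_gt0 (ltnW (t_gt _ _)).
exact: mem_last.
Qed.

Definition shifted_gens (g1 : pt) (gs : seq pt) (L : nat) :=
  flatten [seq [seq ptadd gi (ptscale k g1) | k <- iota 1 L.-1] | gi <- gs].

Lemma shifted_gensP g1 gs L b :
  reflect (exists2 gi, gi \in gs & exists2 k, (0 < k < L)%N & b = ptadd gi (ptscale k g1))
          (b \in shifted_gens g1 gs L).
Proof.
apply: (iffP flatten_mapP) => [[gi Hgi /mapP[k Hk ->]]|[gi Hgi [k Hk ->]]].
  by exists gi => //; exists k => //; move: Hk; rewrite mem_iota; lia.
by exists gi => //; apply: map_f; rewrite mem_iota; lia.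
Qed.

Theorem lemma2p4 (g1 : pt) (gs : seq pt) (lam : seq nat) :
  (* {g1, ..., gp} = g1 :: gs *)
  is_min_gens (g1 :: gs) (gen (g1 :: gs)) ->
  extremal_ray (g1 :: gs) g1 ->
  (forall x : pt, on_line g1 (embQ x) -> gen [:: g1] x) ->
  lam != [::] -> (0 < head 0 lam)%N -> sorted ltn lam ->
  (* s_i = lambda_i g1 *)
  is_min_gens [seq ptscale l g1 | l <- lam] (gen [seq ptscale l g1 | l <- lam]) ->
  let s := [seq ptscale l g1 | l <- lam] in
  let B1 := s ++ gs in
  let B2 := flatten [seq [seq ptadd gi (ptscale k g1) | k <- iota 1 (last 0 lam).-1]
                    | gi <- gs] in
  let B := B1 ++ B2 in
  (forall x : pt, (gen B x /\ on_line g1 (embQ x)) <-> gen s x) /\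
  (forall x : pt, (gen B x /\ ~ on_line g1 (embQ x)) <->
                  (gen (g1 :: gs) x /\ ~ on_line g1 (embQ x))).
Proof.
move=> minA ext line1 lam_nz hd_gt0 lam_sorted _ s B1 B2 B.
have L_gt0 := last_sorted_gt0 lam_nz hd_gt0 lam_sorted.
have gs_off := min_gens_off_line minA line1.
have gsA : {subset gs <= g1 :: gs} := mem_behead (s := g1 :: gs).
have memB b : b \in B = [|| b \in s, b \in gs | b \in shifted_gens g1 gs (last 0 lam)].
  by rewrite !mem_cat orbA.
have BA : {in B, forall b, sgen (g1 :: gs) b}.
  move=> b; rewrite memB => /or3P[/mapP[l _ ->]| Hb | /shifted_gensP[gi Hgi [k _ ->]]].
  - exact/sgen_scale/mem_head.
  - exact/sgen_mem/gsA.
  - exact: sgen_add (sgen_mem (gsA _ Hgi)) (sgen_scale _ (mem_head _ _)).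
have sB : {subset s <= B} by move=> b Hb; rewrite memB Hb.
split=> x; rewrite !genP; split.
- move=> [HB Hx]; apply: (sgen_on_extremal_ray ext BA _ HB Hx) => b.
  rewrite memB => /or3P[// | /gs_off // | /shifted_gensP[gi Hgi [k _ ->]] Ob].
  exfalso; apply: (extremal_ray_add_off_line ext (gen_mem (gsA _ Hgi)) _ _ Ob).
    exact/genP/sgen_scale/mem_head.
  exact: gs_off.
- by move=> Hs; split; [exact: sgen_sub sB Hs | exact: sgen_multiples_on_line Hs].
- by move=> [HB Hx]; split=> //; apply: sgen_trans BA HB.
- move=> [HA Hx]; split=> //; apply: (sgen_off_line L_gt0 _ _ _ HA Hx).
  + rewrite memB; apply/or3P/Or31/(map_f (fun l => ptscale l g1)).
    by have := mem_last 0 lam; rewrite in_cons (negPf (lt0n_neq0 L_gt0)).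
  + by move=> gi Hgi; rewrite memB Hgi orbT.
  + move=> gi m Hgi Hm; rewrite memB; apply/or3P/Or33/shifted_gensP.
    by exists gi => //; exists m.
Qed.
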